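(* Let $G=(V,E,w)$ be a connected weighted undirected graph, let $T$ be a spanning tree of $G$ rooted at a vertex $r$, and let $c\ge 0$ be an integer. Let $e=(u,v)$ and $e'=(u',v')$ be off-tree edges (edges of $G$ not in $T$, with $u\neq v$ and $u'\neq v'$). If $e'$ is strictly similar to $e$ (in the sense defined below), then $\operatorname{LCA}_T(u,v)=\operatorname{LCA}_T(u',v')$. Equivalently, if $\operatorname{LCA}_T(u,v)\neq \operatorname{LCA}_T(u',v')$, then $e'$ is not strictly similar to $e$.
   Context: $\operatorname{LCA}_T(x,y)$ denotes the lowest common ancestor of $x,y$ in the tree $T$ rooted at $r$. $\operatorname{dist}_T(x,y)$ denotes the unweighted (hop) distance between $x$ and $y$ in $T$. For a vertex $x$ and integer $\beta\ge 0$, the $\beta$-hop neighborhood is $S_{x,\beta}=\{y\in V:\operatorname{dist}_T(x,y)\le\beta\}$. For an off-tree edge $e=(u,v)$ define $\beta^*_{u,v}=\min\{\operatorname{dist}_T(u,\operatorname{LCA}_T(u,v)),\ \operatorname{dist}_T(v,\operatorname{LCA}_T(u,v)),\ c\}$. An off-tree edge $e'=(u',v')$ is strictly similar to the off-tree edge $e=(u,v)$ if, with $\beta^*=\beta^*_{u,v}$, $(u'\in S_{u,\beta^*}\wedge v'\in S_{v,\beta^*})\vee(u'\in S_{v,\beta^*}\wedge v'\in S_{u,\beta^*})$. (Note the relation is defined relative to $e$: the neighborhoods and $\beta^*$ are those of $e$.) *)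

From mathcomp Require Import all_boot.
Set Implicit Arguments. Unset Strict Implicit. Unset Printing Implicit Defensive.

Section Graphs.
Variable V : finType.

Definition simple_graph (g : rel V) : Prop :=
  symmetric g /\ irreflexive g.

Definition connected_graph (g : rel V) : Prop :=
  forall x y : V, connect g x y.

(* acyclic: no simple cycle  x -> s_1 -> ... -> s_k -> x  with k >= 2
   (i.e. of length >= 3; shorter closed walks are excluded by simplicity). *)
Definition acyclic (t : rel V) : Prop :=
  ~ exists (x : V) (s : seq V),
      [/\ 2 <= size s, uniq (x :: s), path t x s & t (last x s) x].

Definition spanning_tree (g t : rel V) : Prop :=
  [/\ simple_graph t, subrel t g, connected_graph t & acyclic t].

Definition walkn (t : rel V) (x y : V) (n : nat) : bool :=
  [exists s : n.-tuple V, path t x s && (last x s == y)].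

(* unweighted (hop) distance in t: the least n such that a walk of length n
   from x to y exists (a shortest walk is a simple path, so n < #|V| when
   x and y are connected; the value #|V| is returned otherwise). *)
Definition hop_dist (t : rel V) (x y : V) : nat :=
  \big[minn/#|V|]_(n < #|V| | walkn t x y n) (n : nat).

Definition ancestor (t : rel V) (r a x : V) : Prop :=
  exists s : seq V,
    [/\ path t x s, last x s = r, uniq (x :: s) & a \in x :: s].

Definition is_LCA (t : rel V) (r l x y : V) : Prop :=
  [/\ ancestor t r l x, ancestor t r l y &
      forall a, ancestor t r a x -> ancestor t r a y -> ancestor t r a l].

Definition beta_star (t : rel V) (c : nat) (u v l : V) : nat :=
  minn (minn (hop_dist t u l) (hop_dist t v l)) c.

Definition hop_nbhd (t : rel V) (x : V) (beta : nat) : {set V} :=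
  [set y | hop_dist t x y <= beta].

(* e' = (u',v') is strictly similar to e = (u,v), where l = LCA_T(u,v) *)
Definition strictly_similar (t : rel V) (c : nat) (u v l u' v' : V) : Prop :=
  let b := beta_star t c u v l in
  (u' \in hop_nbhd t u b /\ v' \in hop_nbhd t v b) \/
  (u' \in hop_nbhd t v b /\ v' \in hop_nbhd t u b).

End Graphs.

(* In the tree every vertex has a unique simple path to the root, whose
   vertices are its ancestors.  If [l] is an ancestor of [x] and
   [dist(x, x') <= dist(x, l)], a shortest walk from [x] to [x'] can only leave
   the subtree of the child [c] of [l] towards [x] by ending at [l]; so either
   [x' = l] or [c] is an ancestor of [x'].  Strict similarity provides this for
   both endpoints, since [beta* <= dist(u, l), dist(v, l)].  Hence [l] is a
   common ancestor of [u'] and [v'], so an ancestor of [l'].  Conversely, the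
   children of [l] towards [u] and towards [v] have disjoint subtrees, which
   forces [l'] to be an ancestor of both [u] and [v], hence of [l]. *)

From mathcomp Require Import all_boot zify.
Set Implicit Arguments. Unset Strict Implicit. Unset Printing Implicit Defensive.

Lemma is_LCA_sym (V : finType) (t : rel V) (r l x y : V) :
  is_LCA t r l x y -> is_LCA t r l y x.
Proof. by case=> lx ly lmin; split=> // a ay ax; exact: lmin. Qed.

Lemma geq_bigmin_cond (I : eqType) (s : seq I) (P : pred I) (F : I -> nat) N j :
  j \in s -> P j -> \big[minn/N]_(i <- s | P i) F i <= F j.
Proof.
elim: s => // a s IHs; rewrite in_cons big_cons => /orP[/eqP <-|js] Pj.
  by rewrite Pj geq_minl.
by case: (P a); [exact: leq_trans (geq_minr _ _) (IHs js Pj) | exact: IHs].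
Qed.

Section HopDistance.
Variables (V : finType) (t : rel V).

Lemma hop_dist_le_size x s : path t x s -> hop_dist t x (last x s) <= size s.
Proof.
move=> xs; have [lt_sV|le_Vs] := ltnP (size s) #|V|.
  apply: (geq_bigmin_cond (fun n : 'I_#|V| => n : nat) _ (mem_index_enum (Ordinal lt_sV))).
  by apply/existsP; exists (in_tuple s); rewrite xs eqxx.
apply: leq_trans le_Vs; rewrite /hop_dist.
by elim/big_rec: _ => // i m _; rewrite geq_min => ->; rewrite orbT.
Qed.

(* [hop_dist] falls back to the junk value [#|V|] when no short walk exists;
   between reachable vertices it does not, since a shortest walk is a simple
   path, with fewer than [#|V|] edges. *)
Lemma hop_dist_witness x y : connect t x y ->
  exists s, [/\ size s = hop_dist t x y, path t x s & last x s = y].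
Proof.
move=> /connectP[p xp ->]; case: (shortenP xp) => q xq uq _.
have lt_dV : hop_dist t x (last x q) < #|V|.
  apply: leq_ltn_trans (hop_dist_le_size xq) _.
  by rewrite -/(size (x :: q)) -(card_uniqP uq); exact: max_card.
have : hop_dist t x (last x q) = #|V| \/ walkn t x (last x q) (hop_dist t x (last x q)).
  rewrite /hop_dist; elim/big_ind: _ => [|m n|i]; [by left | | by right].
  by rewrite /minn; case: ltnP.
case=> [eq_dV|/existsP[s /andP[xs /eqP ls]]]; first by rewrite eq_dV ltnn in lt_dV.
by exists s; rewrite size_tuple.
Qed.

End HopDistance.

Section TreePaths.
Variables (V : finType) (t : rel V).
Hypotheses (tsym : symmetric t) (tacyc : acyclic t).

(* Otherwise, following [P] up to its first vertex [z] on [Q] and then [Q]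
   back to [x] closes a cycle of length at least 3. *)
Lemma tree_paths_meet_head x P Q : path t x P -> path t x Q ->
  uniq (x :: P) -> uniq (x :: Q) -> has (mem Q) P -> head x P = head x Q.
Proof.
move=> + + + + PQ; case: (split_find PQ) => z p1 p2 /splitPr[q1 q2] p1Q {PQ}.
rewrite !cat_path -cat_cons !cat_uniq => /andP[xp1z _] /andP[xq1 /= /andP[q1z _]].
rewrite mem_cat negb_or => /andP[up1z _] /andP[/andP[xNq1 _]].
rewrite cat_uniq /= => /and3P[uq1 /norP[zNq1 _] _].
have : path t z (rcons (rev q1) x).
  have : path t x (rcons q1 z) by rewrite rcons_path xq1.
  rewrite -rev_path belast_rcons last_rcons rev_cons.
  by rewrite (eq_path (e' := t)) // => ? ?; rewrite /= tsym.
rewrite rcons_path => /andP[zq1 q1x].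
apply/eqP; apply: contraT => ne; case: tacyc; exists x, (rcons p1 z ++ rev q1); split.
- rewrite size_cat size_rcons size_rev.
  by move: ne; case: (p1) (q1) => [|? ?] [|? ?] /=; rewrite ?eqxx // => _; lia.
- rewrite -cat_cons cat_uniq rev_uniq uq1 has_rev andbT; apply/andP; split=> //.
  apply/hasPn => y yq1.
  rewrite !inE mem_rcons !inE !negb_or; apply/and3P; split.
  + by apply: contraNneq xNq1 => <-.
  + by apply: contraNneq zNq1 => <-.
  + by apply/negP => /(hasPn p1Q); rewrite /= mem_cat yq1.
- by rewrite cat_path xp1z last_rcons.
- by rewrite last_cat last_rcons.
Qed.

Lemma tree_path_unique x p q : path t x p -> path t x q ->
  uniq (x :: p) -> uniq (x :: q) -> last x p = last x q -> p = q.
Proof.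
have lastNx (y : V) s : uniq (y :: s) -> last y s = y -> s = [::].
  by case: s => //= a s /andP[+ _] la; rewrite -{1}la mem_last.
elim: p x q => [|a p IHp] x [|b q] xp xq up uq //= lpq.
- by have := lastNx x (b :: q) uq (esym lpq).
- by have := lastNx x (a :: p) up lpq.
have eq_ab : a = b.
  apply: (tree_paths_meet_head xp xq up uq); apply/hasP.
  exists (last a p); first exact: mem_last.
  by rewrite lpq; exact: mem_last.
move: xp xq up uq lpq; rewrite -{}eq_ab /= => /andP[_ ap] /andP[_ aq] /andP[_ up] /andP[_ uq].
by move/(IHp a q ap aq up uq) ->.
Qed.

End TreePaths.

Section RootedTree.
Variables (V : finType) (t : rel V) (r : V).
Hypotheses (tsym : symmetric t) (tirr : irreflexive t).
Hypotheses (tconn : connected_graph t) (tacyc : acyclic t).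

Definition root_path x s := [&& path t x s, uniq (x :: s) & last x s == r].

Lemma root_path_exists x : exists s, root_path x s.
Proof.
have /connectP[p xp lp] := tconn x r; case: (shortenP xp) lp => s xs us _ ls.
by exists s; rewrite /root_path xs us ls eqxx.
Qed.

Definition path_to_root x := xchoose (root_path_exists x).

Definition ancestors x := x :: path_to_root x.

Lemma root_path_to_root x : root_path x (path_to_root x).
Proof. exact: xchooseP. Qed.

Lemma root_pathE x s : root_path x s -> s = path_to_root x.
Proof.
case/and3P: (root_path_to_root x) => xp up /eqP lp /and3P[xs us /eqP ls].
by apply: (tree_path_unique tsym tacyc xs xp us up); rewrite ls lp.
Qed.

Lemma ancestorE a x : ancestor t r a x <-> a \in ancestors x.
Proof.
split=> [[s [xs ls us ain]]|ax].
  by rewrite /ancestors -(@root_pathE x s) // /root_path xs us ls eqxx.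
by case/and3P: (root_path_to_root x) => xp up /eqP lp; exists (path_to_root x).
Qed.

Lemma path_to_root_suffix x s1 a s2 :
  ancestors x = s1 ++ a :: s2 -> path_to_root a = s2.
Proof.
move=> def_x; case/and3P: (root_path_to_root x); move: def_x; rewrite /ancestors.
case: s1 => [[-> ->] //|y s1 [_ ->]].
rewrite cat_path last_cat -cat_cons cat_uniq => /andP[_ /= /andP[_ as2]] /and3P[_ _ us2] ls2.
by apply/esym/root_pathE/and3P.
Qed.

Lemma ancestors_suffix a x : a \in ancestors x -> exists s, ancestors x = s ++ ancestors a.
Proof.
move=> ax; case/splitPr def_x: (ancestors x) / ax => [s1 s2].
by exists s1; rewrite /ancestors (path_to_root_suffix def_x).
Qed.

Lemma ancestors_refl x : x \in ancestors x.
Proof. exact: mem_head. Qed.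

Lemma ancestors_trans a b x : a \in ancestors b -> b \in ancestors x -> a \in ancestors x.
Proof. by move=> ab /ancestors_suffix[s ->]; rewrite mem_cat ab orbT. Qed.

Lemma ancestors_total a b x : a \in ancestors x -> b \in ancestors x ->
  a \in ancestors b \/ b \in ancestors a.
Proof.
case/ancestors_suffix=> s def_x; rewrite def_x mem_cat => /orP[bs|]; last by right.
move: def_x; case/splitPr: bs => s1 s2; rewrite -catA cat_cons => def_x.
by left; rewrite /ancestors (path_to_root_suffix def_x) in_cons mem_cat ancestors_refl !orbT.
Qed.

Lemma ancestors_antisym a b : a \in ancestors b -> b \in ancestors a -> a = b.
Proof.
case/ancestors_suffix=> s def_b /ancestors_suffix[s' def_a].
have /eqP : size (ancestors b) = size s + size s' + size (ancestors b).
  by rewrite {1}def_b def_a !size_cat addnA.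
rewrite -{1}[size (ancestors b)]add0n eqn_add2r eq_sym addn_eq0 => /andP[/nilP s0 _].
by move: def_b; rewrite s0 => -[->].
Qed.

Lemma path_to_root_edge p q : t p q -> p \notin ancestors q -> path_to_root p = ancestors q.
Proof.
move=> pq pNq; case/and3P: (root_path_to_root q) => qp uq lq.
by apply/esym/root_pathE/and3P; split=> //=; apply/andP.
Qed.

Lemma ancestors_edge p q : t p q ->
  ancestors p = p :: ancestors q \/ ancestors q = q :: ancestors p.
Proof.
move=> pq; have [pq_anc|pNq] := boolP (p \in ancestors q); last first.
  by left; rewrite /ancestors (path_to_root_edge pq pNq).
have qNp : q \notin ancestors p.
  by apply/negP => qp_anc; move: pq; rewrite (ancestors_antisym pq_anc qp_anc) tirr.
by right; rewrite /ancestors (path_to_root_edge _ qNp) // tsym.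
Qed.

Lemma walk_exits_subtree x s c : path t x s ->
  c \in ancestors x -> c \notin ancestors (last x s) ->
  exists2 p, p \in s & path_to_root c = ancestors p.
Proof.
elim: s x => [|y s IHs] x /=; first by move=> _ ->.
case/andP=> xy ys cx; have [cy|cNy] := boolP (c \in ancestors y).
  by case/(IHs y ys cy)=> p ps ->; exists p; rewrite // in_cons ps orbT.
move=> _; exists y; first exact: mem_head.
case: (ancestors_edge xy) => [ax|ay]; last by rewrite ay in_cons cx orbT in cNy.
by move: cx; rewrite ax in_cons (negbTE cNy) orbF => /eqP ->; case: ax.
Qed.

Lemma child_towards l x : l \in path_to_root x ->
  exists2 c, c \in ancestors x & path_to_root c = ancestors l.
Proof.
move=> lx; case/splitPr def_x: (path_to_root x) / lx => [s1 s2].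
have def_l : ancestors x = (x :: s1) ++ l :: s2 by rewrite /ancestors def_x.
exists (last x s1); first by rewrite def_l mem_cat mem_last.
have def_c : ancestors x = belast x s1 ++ last x s1 :: l :: s2.
  by rewrite def_l lastI cat_rcons.
by rewrite (path_to_root_suffix def_c) /ancestors (path_to_root_suffix def_l).
Qed.

(* If the child [c] of [l] towards [x] is not an ancestor of [x'], a shortest
   walk from [x] to [x'] leaves the subtree of [c], hence passes through [l],
   and is then longer than [dist(x, l)] unless it stops there. *)
Lemma near_ancestor x x' l : l \in ancestors x -> hop_dist t x x' <= hop_dist t x l ->
  x' = l \/ exists c, [/\ c \in ancestors x, c \in ancestors x',
                          l \in ancestors c & c \notin ancestors l].
Proof.
have [s [<- xs ls]] := hop_dist_witness (tconn x x').
rewrite in_cons => /predU1P[->|lx] le_d.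
  have le_x0 := hop_dist_le_size (t := t) (x := x) (s := [::]) isT.
  have s0 : s = [::] by apply/nilP; rewrite /nilp -leqn0 (leq_trans le_d le_x0).
  by left; rewrite -ls s0.
have [c cx def_c] := child_towards lx.
have lc : l \in ancestors c by rewrite /ancestors def_c in_cons ancestors_refl orbT.
have cNl : c \notin ancestors l.
  by rewrite -def_c; case/and3P: (root_path_to_root c) => _ /andP[].
have [cx'|cNx'] := boolP (c \in ancestors x'); first by right; exists c.
have l_walk : l \in x :: s.
  rewrite -ls in cNx'; have [p ps def_p] := walk_exits_subtree xs cx cNx'.
  have -> : l = p by move: def_p; rewrite def_c => -[].
  by rewrite in_cons ps orbT.
move: le_d xs ls; case/splitPl: l_walk => s1 s2 ls1.
rewrite size_cat cat_path last_cat ls1 => le_d /andP[xs1 _].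
case: s2 => [|y s2] /= in le_d * => [ls|_]; first by left.
by have := hop_dist_le_size xs1; rewrite ls1; lia.
Qed.

Lemma is_LCAE l x y : is_LCA t r l x y <->
  [/\ l \in ancestors x, l \in ancestors y &
      forall a, a \in ancestors x -> a \in ancestors y -> a \in ancestors l].
Proof.
split=> -[lx ly lmin]; split; try exact/ancestorE.
  by move=> a ax ay; apply/ancestorE/lmin; exact/ancestorE.
by move=> a /ancestorE ax /ancestorE ay; apply/ancestorE/lmin.
Qed.

Lemma LCA_branches_disjoint l x y wx wy z : is_LCA t r l x y ->
  wx \in ancestors x -> wx \notin ancestors l ->
  wy \in ancestors y -> wy \notin ancestors l ->
  wx \in ancestors z -> wy \in ancestors z -> False.
Proof.
move=> /is_LCAE[_ _ lmin] wxx /negP wxNl wyy /negP wyNl wxz wyz.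
case: (ancestors_total wxz wyz) => [wx_wy|wy_wx].
  by apply: wxNl; apply: lmin wxx (ancestors_trans wx_wy wyy).
by apply: wyNl; apply: lmin (ancestors_trans wy_wx wxx) wyy.
Qed.

Lemma LCA_eq_of_near x y x' y' l l' : is_LCA t r l x y -> is_LCA t r l' x' y' ->
  hop_dist t x x' <= hop_dist t x l -> hop_dist t y y' <= hop_dist t y l -> l = l'.
Proof.
move=> lxy /is_LCAE[l'x' l'y' l'min] dx dy; have /is_LCAE[lx ly lmin] := lxy.
have nx := near_ancestor lx dx; have ny := near_ancestor ly dy.
have lx' : l \in ancestors x'.
  case: nx => [->|[c [_ cx' lc _]]]; first exact: ancestors_refl.
  exact: ancestors_trans lc cx'.
have ly' : l \in ancestors y'.
  case: ny => [->|[c [_ cy' lc _]]]; first exact: ancestors_refl.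
  exact: ancestors_trans lc cy'.
apply: ancestors_antisym (l'min l lx' ly') _.
case: nx => [<-|[cx [cxx cxx' _ cxNl]]]; first exact: l'x'.
case: ny => [<-|[cy [cyy cyy' _ cyNl]]]; first exact: l'y'.
have disj := LCA_branches_disjoint lxy cxx cxNl cyy cyNl.
apply: lmin.
- have [l'cx|cxl'] := ancestors_total l'x' cxx'; first exact: ancestors_trans l'cx cxx.
  by case: (disj y'); [exact: ancestors_trans cxl' l'y' | exact: cyy'].
- have [l'cy|cyl'] := ancestors_total l'y' cyy'; first exact: ancestors_trans l'cy cyy.
  by case: (disj x'); [exact: cxx' | exact: ancestors_trans cyl' l'x'].
Qed.

End RootedTree.

Theorem mainTheorem1 (V : finType) (g t : rel V) (r : V) (c : nat)
    (u v u' v' l l' : V) :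
    simple_graph g -> connected_graph g -> spanning_tree g t ->
    g u v -> ~~ t u v -> u != v ->
    g u' v' -> ~~ t u' v' -> u' != v' ->
    is_LCA t r l u v -> is_LCA t r l' u' v' ->
    strictly_similar t c u v l u' v' ->
    l = l'.
Proof.
move=> _ _ [[tsym tirr] _ tconn tacyc] _ _ _ _ _ _ luv l'u'v'.
have bu : beta_star t c u v l <= hop_dist t u l := leq_trans (geq_minl _ _) (geq_minl _ _).
have bv : beta_star t c u v l <= hop_dist t v l := leq_trans (geq_minl _ _) (geq_minr _ _).
rewrite /strictly_similar !inE => -[[uu' vv']|[vu' uv']].
  exact: (LCA_eq_of_near (r := r) tsym tirr tconn tacyc luv l'u'v'
    (leq_trans uu' bu) (leq_trans vv' bv)).
exact: (LCA_eq_of_near (r := r) tsym tirr tconn tacyc (is_LCA_sym luv) l'u'v'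
  (leq_trans vu' bv) (leq_trans uv' bu)).
Qed.
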